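(* Let $n_1,n_2,n_3\ge 1$, $n=n_1+n_2+n_3$, and let $I_1=\{1,\dots,n_1\}$, $I_2=\{n_1+1,\dots,n_1+n_2\}$, $I_3=\{n_1+n_2+1,\dots,n\}$. Consider $G/H=\mathrm{SO}(n)/\mathrm{SO}(n_1)\cdot\mathrm{SO}(n_2)\cdot\mathrm{SO}(n_3)$ (block-diagonal embedding) with $\mathfrak m=\mathfrak m_{12}\oplus\mathfrak m_{13}\oplus\mathfrak m_{23}$, where $\mathfrak m_{ij}=\mathrm{span}\{\xi_{ab}: a\in I_i,\ b\in I_j\}$. Let $X=X_{\mathfrak m_{12}}+X_{\mathfrak m_{13}}+X_{\mathfrak m_{23}}\in\mathfrak m$ with $X_{\mathfrak m_{ij}}\in\mathfrak m_{ij}$. Then $X$ is an equigeodesic vector (with respect to the family of metrics $\Lambda=\lambda_{12}\mathrm{Id}_{\mathfrak m_{12}}+\lambda_{13}\mathrm{Id}_{\mathfrak m_{13}}+\lambda_{23}\mathrm{Id}_{\mathfrak m_{23}}$, $\lambda_{ij}>0$) if and only if $$[X_{\mathfrak m_{12}},X_{\mathfrak m_{13}}]_{\mathfrak m}=0,\quad [X_{\mathfrak m_{12}},X_{\mathfrak m_{23}}]_{\mathfrak m}=0,\quad [X_{\mathfrak m_{13}},X_{\mathfrak m_{23}}]_{\mathfrak m}=0.$$ Equivalently, writing $X=\sum a_{kl}\xi_{kl}$ (sum over pairs $k<l$ lying in different blocks) and forming the real matrices $A=(a_{ij})_{i\in I_1,j\in I_2}$, $C=(a_{ik})_{i\in I_1,k\in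 I_3}$, $D=(a_{jk})_{j\in I_2,k\in I_3}$, $X$ is equigeodesic if and only if $A^{t}C=0$, $AD=0$ and $CD^{t}=0$.
   Context: $E_{ab}$ denotes the $n\times n$ matrix with $1$ in entry $(a,b)$ and $0$ elsewhere, and $\xi_{ab}=E_{ab}-E_{ba}\in\mathfrak{so}(n)$. $\mathfrak m$ is the orthogonal complement of $\mathfrak h=\mathfrak{so}(n_1)\oplus\mathfrak{so}(n_2)\oplus\mathfrak{so}(n_3)$ in $\mathfrak{so}(n)$ with respect to $B(X,Y)=-\mathrm{tr}(XY)$, and $[\cdot,\cdot]_{\mathfrak m}$ denotes the $\mathfrak m$-component of the Lie bracket. Given a family of $B$-symmetric positive operators $\Lambda:\mathfrak m\to\mathfrak m$ (invariant metrics), a nonzero $X\in\mathfrak m$ is called an equigeodesic vector if $[X,\Lambda X]_{\mathfrak m}=0$ for every $\Lambda$ in the family (equivalently, $t\mapsto \exp(tX)\cdot eH$ is a geodesic for every such metric). *)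

From HB Require Import structures.
From mathcomp Require Import all_boot all_order all_algebra.
From mathcomp Require Import reals.
Set Implicit Arguments. Unset Strict Implicit. Unset Printing Implicit Defensive.
Import Order.TTheory GRing.Theory Num.Theory.
Local Open Scope ring_scope.

Section Defs.
Variables (R : realType) (n1 n2 n3 : nat).
Notation N := (n1 + n2 + n3)%N.

(* block of an index: I_1 = [0,n1), I_2 = [n1,n1+n2), I_3 = [n1+n2,n) (0-based) *)
Definition blk (a : 'I_N) : nat :=
  if (a < n1)%N then 1%N else if (a < n1 + n2)%N then 2%N else 3%N.

Definition skew (X : 'M[R]_N) : Prop := X^T = - X.

Definition in_h (Y : 'M[R]_N) : Prop :=
  skew Y /\ forall a b : 'I_N, blk a != blk b -> Y a b = 0.

Definition Bform (X Y : 'M[R]_N) : R := - \tr (X *m Y).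

Definition in_m (X : 'M[R]_N) : Prop :=
  skew X /\ forall Y, in_h Y -> Bform X Y = 0.

(* m_ij = span{ xi_ab : a in I_i, b in I_j } : skew matrices supported on
   (I_i x I_j) u (I_j x I_i) *)
Definition in_mij (i j : nat) (X : 'M[R]_N) : Prop :=
  skew X /\ forall a b : 'I_N,
    ~~ (((blk a == i) && (blk b == j)) || ((blk a == j) && (blk b == i))) ->
    X a b = 0.

(* the m_ij-component of a matrix (B-orthogonal projection onto m_ij) *)
Definition comp (i j : nat) (X : 'M[R]_N) : 'M[R]_N :=
  \matrix_(a, b)
    if ((blk a == i) && (blk b == j)) || ((blk a == j) && (blk b == i))
    then X a b else 0.

(* the m-component of a matrix of so(n) (B-orthogonal projection onto m) *)
Definition proj_m (X : 'M[R]_N) : 'M[R]_N :=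
  \matrix_(a, b) if blk a == blk b then 0 else X a b.

Definition brack_m (X Y : 'M[R]_N) : 'M[R]_N := proj_m (X *m Y - Y *m X).

Definition Lam (l12 l13 l23 : R) (X : 'M[R]_N) : 'M[R]_N :=
  l12 *: comp 1 2 X + l13 *: comp 1 3 X + l23 *: comp 2 3 X.

Definition equigeodesic (X : 'M[R]_N) : Prop :=
  in_m X /\ X != 0 /\
  forall l12 l13 l23 : R, 0 < l12 -> 0 < l13 -> 0 < l23 ->
    brack_m X (Lam l12 l13 l23 X) = 0.

Definition i1 (i : 'I_n1) : 'I_N := lshift n3 (lshift n2 i).
Definition i2 (j : 'I_n2) : 'I_N := lshift n3 (rshift n1 j).
Definition i3 (k : 'I_n3) : 'I_N := rshift (n1 + n2) k.

(* X = sum_{k<l} a_kl xi_kl, so a_kl = X k l *)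
Definition matA (X : 'M[R]_N) : 'M[R]_(n1, n2) := \matrix_(i, j) X (i1 i) (i2 j).
Definition matC (X : 'M[R]_N) : 'M[R]_(n1, n3) := \matrix_(i, k) X (i1 i) (i3 k).
Definition matD (X : 'M[R]_N) : 'M[R]_(n2, n3) := \matrix_(j, k) X (i2 j) (i3 k).

End Defs.

From Pilot Require Import Defs.
From HB Require Import structures.
From mathcomp Require Import all_boot all_order all_algebra.
From mathcomp Require Import reals ring lra.
Import Order.TTheory GRing.Theory Num.Theory.
Local Open Scope ring_scope.

(* The argument has three parts.
   1. Bracket calculus on the block structure: for pairwise distinct blocks
      p, q, r one has [m_pq, m_qr]_m <= m_pr (brack_mij), and [X, Lambda X]_m
      expands bilinearly as
        (l13 - l12)[X12,X13]_m + (l23 - l12)[X12,X23]_m + (l23 - l13)[X13,X23]_m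
      (brack_expand).  The three brackets lie in m_23, m_13 and m_12.
   2. Projecting [X, Lambda X]_m onto m_23, m_13 and m_12 therefore isolates
      each bracket (comp_geodesic_bracket); the metrics (1,2,1) and (1,1,2)
      force all three brackets to vanish, which gives the first equivalence
      (equigeodesic_brackets).
   3. The only nonzero block of each bracket is an explicit matrix product,
      -A^T C, A D and -C D^T respectively (brack12_13E, ...), and a matrix of
      m_pq vanishes as soon as its (p,q) block does (mij_eq0). *)

Section BlockMatrices.
Variables (R : realType) (n1 n2 n3 : nat).
Local Notation N := (n1 + n2 + n3)%N.
Local Notation I1 := (@i1 n1 n2 n3).
Local Notation I2 := (@i2 n1 n2 n3).
Local Notation I3 := (@i3 n1 n2 n3).
Implicit Types (M P Q : 'M[R]_N) (a b c : 'I_N) (p q r s t : nat).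

Definition on_blocks p q a b : bool :=
  ((blk a == p) && (blk b == q)) || ((blk a == q) && (blk b == p)).

Lemma blk_i1 i : blk (I1 i) = 1%N.
Proof. by rewrite /blk /= ltn_ord. Qed.

Lemma blk_i2 j : blk (I2 j) = 2%N.
Proof. by rewrite /blk /= ltnNge leq_addr /= ltn_add2l ltn_ord. Qed.

Lemma blk_i3 k : blk (I3 k) = 3%N.
Proof. by rewrite /blk /= ltnNge -addnA leq_addr /= ltn_add2l ltnNge leq_addr. Qed.

Variant block_spec : 'I_N -> nat -> Prop :=
  | Block1 i : block_spec (I1 i) 1
  | Block2 j : block_spec (I2 j) 2
  | Block3 k : block_spec (I3 k) 3.

Lemma blockP a : block_spec a (blk a).
Proof.
rewrite -(splitK a); case: (split a) => [b|k].
  rewrite -(splitK b); case: (split b) => [i|j].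
    by rewrite -[unsplit _]/(I1 i) blk_i1; constructor.
  by rewrite -[unsplit _]/(I2 j) blk_i2; constructor.
by rewrite -[unsplit _]/(I3 k) blk_i3; constructor.
Qed.

Lemma sum_blocks (F : 'I_N -> R) :
  \sum_c F c = \sum_i F (I1 i) + \sum_j F (I2 j) + \sum_k F (I3 k).
Proof. by rewrite big_split_ord big_split_ord. Qed.

Lemma skewE {M} : Defs.skew M -> forall a b, M a b = - M b a.
Proof. by move=> hM a b; have := congr1 (fun A : 'M[R]_N => A b a) hM; rewrite !mxE. Qed.

Lemma skewD M M' : Defs.skew M -> Defs.skew M' -> Defs.skew (M + M').
Proof. by move=> hM hM'; rewrite /Defs.skew linearD /= hM hM' opprD. Qed.

Lemma in_mij_sym {p q M} : in_mij p q M -> in_mij q p M.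
Proof. by case=> hs hM; split=> // a b h; apply: hM; rewrite orbC. Qed.

Lemma mij_row0 {p q M a c} : in_mij p q M -> p != q ->
  blk a = p -> blk c != q -> M a c = 0.
Proof. by move=> [_ hM] pq ha hc; apply: hM; rewrite ha eqxx (negbTE hc) (negbTE pq). Qed.

Lemma mij_diag0 {p q M a b} : in_mij p q M -> p != q -> blk a = blk b -> M a b = 0.
Proof.
move=> [_ hM] pq e; apply: hM; rewrite e; apply: contra pq.
by case/orP => /andP[/eqP<- /eqP<-].
Qed.

(* By skew-symmetry, a matrix of m_pq is zero once its (p,q) block is. *)
Lemma mij_eq0 {p q M} : in_mij p q M ->
  (forall a b, blk a = p -> blk b = q -> M a b = 0) -> M = 0.
Proof.
move=> [hs hM] h0; apply/matrixP => a b; rewrite mxE.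
case/boolP: (on_blocks p q a b) => [|/hM //].
case/orP => /andP[/eqP ha /eqP hb]; first exact: h0.
by rewrite (skewE hs) h0 ?oppr0.
Qed.

Lemma mul_block0 {p q r P Q} a b : in_mij p q P -> in_mij q r Q ->
  p != q -> q != r -> p != r ->
  ~~ ((blk a == p) && (blk b == r)) -> (P *m Q) a b = 0.
Proof.
move=> [_ hP] [_ hQ] pq qr pr hab; rewrite mxE; apply: big1 => c _.
have [cP|/hP->] := boolP (on_blocks p q a c); last by rewrite mul0r.
have [cQ|/hQ->] := boolP (on_blocks q r c b); last by rewrite mulr0.
move: cP cQ hab pq qr pr; rewrite /on_blocks; move: (blk a) (blk c) (blk b) => x y z.
by case/orP=> /andP[/eqP ? /eqP ?]; case/orP=> /andP[/eqP ? /eqP ?]; subst;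
  rewrite ?eqxx.
Qed.

(* The projection onto m commutes with transposition and negation, so the
   m-bracket of skew matrices is skew. *)
Lemma proj_m_tr M : (proj_m M)^T = proj_m M^T.
Proof. by apply/matrixP => a b; rewrite !mxE eq_sym. Qed.

Lemma proj_mN M : proj_m (- M) = - proj_m M.
Proof. by apply/matrixP => a b; rewrite !mxE; case: ifP; rewrite ?oppr0. Qed.

Lemma brack_skew P Q : Defs.skew P -> Defs.skew Q -> Defs.skew (brack_m P Q).
Proof.
move=> hP hQ; rewrite /Defs.skew /brack_m proj_m_tr linearB /= !trmx_mul hP hQ.
by rewrite !mulmxN !mulNmx !opprK -proj_mN opprB.
Qed.

Lemma brack_mij {p q r P Q} : in_mij p q P -> in_mij q r Q ->
  p != q -> q != r -> p != r -> in_mij p r (brack_m P Q).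
Proof.
move=> hP hQ pq qr pr; split; first exact: brack_skew (proj1 hP) (proj1 hQ).
move=> a b /norP[hpr hrp]; rewrite mxE; case: ifP => // _; rewrite mxE [(- _ : 'M[R]_N) a b]mxE.
by rewrite (mul_block0 _ _ hP hQ) // (mul_block0 _ _ (in_mij_sym hQ) (in_mij_sym hP))
  ?subr0 // eq_sym.
Qed.

(* Bilinear expansion of [X, Lambda X]_m for X = P1 + P2 + P3 and
   Lambda X = l1 P1 + l2 P2 + l3 P3: the diagonal terms [Pi, Pi] cancel. *)
Lemma brack_expand P1 P2 P3 (l1 l2 l3 : R) :
  brack_m (P1 + P2 + P3) (l1 *: P1 + l2 *: P2 + l3 *: P3) =
  (l2 - l1) *: brack_m P1 P2 + (l3 - l1) *: brack_m P1 P3 + (l3 - l2) *: brack_m P2 P3.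
Proof.
rewrite /brack_m !mulmxDl !mulmxDr -!scalemxAl -!scalemxAr.
move: (P1 *m P1) (P1 *m P2) (P1 *m P3) (P2 *m P1) (P2 *m P2) (P2 *m P3)
  (P3 *m P1) (P3 *m P2) (P3 *m P3) => M11 M12 M13 M21 M22 M23 M31 M32 M33.
by apply/matrixP => a b; rewrite !mxE; case: (blk a == blk b); ring.
Qed.

Lemma off_diag_in_m M : Defs.skew M ->
  (forall a b, blk a = blk b -> M a b = 0) -> in_m M.
Proof.
move=> hs h0; split=> // Y [_ hY]; apply/eqP; rewrite oppr_eq0; apply/eqP.
apply: big1 => a _; rewrite mxE; apply: big1 => b _.
have [e|ne] := eqVneq (blk a) (blk b); first by rewrite h0 ?mul0r.
by rewrite hY ?mulr0 // eq_sym.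
Qed.

Lemma compD p q : {morph (@Defs.comp R n1 n2 n3 p q) : A B / A + B}.
Proof. by move=> A B; apply/matrixP => a b; rewrite !mxE; case: ifP; rewrite ?addr0. Qed.

Lemma compZ p q (x : R) M : Defs.comp p q (x *: M) = x *: Defs.comp p q M.
Proof. by apply/matrixP => a b; rewrite !mxE; case: ifP; rewrite ?mulr0. Qed.

Lemma comp0 p q : Defs.comp p q 0 = 0 :> 'M[R]_N.
Proof. by apply/matrixP => a b; rewrite !mxE; case: ifP. Qed.

Lemma comp_id {p q M} : in_mij p q M -> Defs.comp p q M = M.
Proof. by case=> _ hM; apply/matrixP => a b; rewrite mxE; case: ifP => // /negbT /hM ->. Qed.

Lemma comp_off {p q M} s t : in_mij p q M ->
  ~~ (((s == p) && (t == q)) || ((s == q) && (t == p))) -> Defs.comp s t M = 0.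
Proof.
case=> _ hM hst; apply/matrixP => a b; rewrite !mxE; case: ifP => // hab; apply: hM.
apply: contra hst; move: hab; rewrite /on_blocks; move: (blk a) (blk b) => x y.
by case/orP=> /andP[/eqP ? /eqP ?]; case/orP=> /andP[/eqP ? /eqP ?]; subst; rewrite !eqxx ?orbT.
Qed.

Lemma matA_comp M : matA (Defs.comp 1 2 M) = matA M.
Proof. by apply/matrixP => i j; rewrite !mxE blk_i1 blk_i2. Qed.

Lemma matC_comp M : matC (Defs.comp 1 3 M) = matC M.
Proof. by apply/matrixP => i k; rewrite !mxE blk_i1 blk_i3. Qed.

Lemma matD_comp M : matD (Defs.comp 2 3 M) = matD M.
Proof. by apply/matrixP => j k; rewrite !mxE blk_i2 blk_i3. Qed.

Lemma brack12_13E P Q j k : in_mij 1 2 P -> in_mij 1 3 Q ->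
  brack_m P Q (I2 j) (I3 k) = - ((matA P)^T *m matC Q) j k.
Proof.
move=> hP hQ; have hP21 := in_mij_sym hP.
rewrite mxE blk_i2 blk_i3 /= mxE [(- _ : 'M[R]_N) _ _]mxE.
rewrite (mul_block0 _ _ (in_mij_sym hQ) hP) ?blk_i2 // subr0 mxE sum_blocks.
rewrite [X in _ + X + _]big1 => [|j' _]; last by rewrite (mij_row0 hP21) ?blk_i2 ?mul0r.
rewrite [X in _ + X]big1 => [|k' _]; last by rewrite (mij_row0 hP21) ?blk_i2 ?blk_i3 ?mul0r.
rewrite !addr0 mxE -sumrN; apply: eq_bigr => i _.
by rewrite !mxE (skewE (proj1 hP) (I2 j)) mulNr.
Qed.

Lemma brack12_23E P Q i k : in_mij 1 2 P -> in_mij 2 3 Q ->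
  brack_m P Q (I1 i) (I3 k) = (matA P *m matD Q) i k.
Proof.
move=> hP hQ.
rewrite mxE blk_i1 blk_i3 /= mxE [(- _ : 'M[R]_N) _ _]mxE.
rewrite (mul_block0 _ _ (in_mij_sym hQ) (in_mij_sym hP)) ?blk_i1 // subr0 mxE sum_blocks.
rewrite [X in X + _ + _]big1 => [|i' _]; last by rewrite (mij_row0 hP) ?blk_i1 ?mul0r.
rewrite [X in _ + X]big1 => [|k' _]; last by rewrite (mij_row0 hP) ?blk_i1 ?blk_i3 ?mul0r.
by rewrite add0r addr0 mxE; apply: eq_bigr => j _; rewrite !mxE.
Qed.

Lemma brack13_23E P Q i j : in_mij 1 3 P -> in_mij 2 3 Q ->
  brack_m P Q (I1 i) (I2 j) = - (matC P *m (matD Q)^T) i j.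
Proof.
move=> hP hQ.
rewrite mxE blk_i1 blk_i2 /= mxE [(- _ : 'M[R]_N) _ _]mxE.
rewrite (mul_block0 _ _ hQ (in_mij_sym hP)) ?blk_i1 // subr0 mxE sum_blocks.
rewrite [X in X + _ + _]big1 => [|i' _]; last by rewrite (mij_row0 hP) ?blk_i1 ?mul0r.
rewrite [X in _ + X + _]big1 => [|j' _]; last by rewrite (mij_row0 hP) ?blk_i1 ?blk_i2 ?mul0r.
rewrite !add0r mxE -sumrN; apply: eq_bigr => k _.
by rewrite !mxE (skewE (proj1 hQ) (I3 k)) mulrN.
Qed.

Lemma brack12_13_eq0 {P Q} : in_mij 1 2 P -> in_mij 1 3 Q ->
  brack_m P Q = 0 <-> (matA P)^T *m matC Q = 0.
Proof.
move=> hP hQ; split=> h.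
  apply/matrixP => j k; rewrite [RHS]mxE; apply/eqP.
  by rewrite -oppr_eq0 -brack12_13E // h mxE.
apply: (mij_eq0 (brack_mij (in_mij_sym hP) hQ isT isT isT)) => // a b.
case: (blockP a) => // j _; case: (blockP b) => // k _.
by rewrite brack12_13E // h mxE oppr0.
Qed.

Lemma brack12_23_eq0 {P Q} : in_mij 1 2 P -> in_mij 2 3 Q ->
  brack_m P Q = 0 <-> matA P *m matD Q = 0.
Proof.
move=> hP hQ; split=> h.
  by apply/matrixP => i k; rewrite [RHS]mxE -brack12_23E // h mxE.
apply: (mij_eq0 (brack_mij hP hQ isT isT isT)) => // a b.
case: (blockP a) => // i _; case: (blockP b) => // k _.
by rewrite brack12_23E // h mxE.
Qed.

Lemma brack13_23_eq0 {P Q} : in_mij 1 3 P -> in_mij 2 3 Q ->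
  brack_m P Q = 0 <-> matC P *m (matD Q)^T = 0.
Proof.
move=> hP hQ; split=> h.
  apply/matrixP => i j; rewrite [RHS]mxE; apply/eqP.
  by rewrite -oppr_eq0 -brack13_23E // h mxE.
apply: (mij_eq0 (brack_mij hP (in_mij_sym hQ) isT isT isT)) => // a b.
case: (blockP a) => // i _; case: (blockP b) => // j _.
by rewrite brack13_23E // h mxE oppr0.
Qed.

Variables (X12 X13 X23 : 'M[R]_N).
Hypotheses (hX12 : in_mij 1 2 X12) (hX13 : in_mij 1 3 X13) (hX23 : in_mij 2 3 X23).
Local Notation X := (X12 + X13 + X23).

Lemma comp12_X : Defs.comp 1 2 X = X12.
Proof. by rewrite !compD (comp_id hX12) (comp_off _ _ hX13) // (comp_off _ _ hX23) // !addr0. Qed.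

Lemma comp13_X : Defs.comp 1 3 X = X13.
Proof. by rewrite !compD (comp_off _ _ hX12) // (comp_id hX13) (comp_off _ _ hX23) // add0r addr0. Qed.

Lemma comp23_X : Defs.comp 2 3 X = X23.
Proof. by rewrite !compD (comp_off _ _ hX12) // (comp_off _ _ hX13) // (comp_id hX23) !add0r. Qed.

Lemma Lam_X (l12 l13 l23 : R) : Lam l12 l13 l23 X = l12 *: X12 + l13 *: X13 + l23 *: X23.
Proof. by rewrite /Lam comp12_X comp13_X comp23_X. Qed.

Lemma in_m_X : in_m X.
Proof.
apply: off_diag_in_m.
  by apply: skewD; [apply: skewD; [exact: proj1 hX12 | exact: proj1 hX13] | exact: proj1 hX23].
move=> a b e.
by rewrite !mxE (mij_diag0 hX12 _ e) // (mij_diag0 hX13 _ e) // (mij_diag0 hX23 _ e) // !addr0.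
Qed.

Lemma comp_geodesic_bracket (l12 l13 l23 : R) :
  let G := brack_m X (Lam l12 l13 l23 X) in
  [/\ Defs.comp 2 3 G = (l13 - l12) *: brack_m X12 X13,
      Defs.comp 1 3 G = (l23 - l12) *: brack_m X12 X23
    & Defs.comp 1 2 G = (l23 - l13) *: brack_m X13 X23].
Proof.
have B1 : in_mij 2 3 (brack_m X12 X13) := brack_mij (in_mij_sym hX12) hX13 isT isT isT.
have B2 : in_mij 1 3 (brack_m X12 X23) := brack_mij hX12 hX23 isT isT isT.
have B3 : in_mij 1 2 (brack_m X13 X23) := brack_mij hX13 (in_mij_sym hX23) isT isT isT.
rewrite /= Lam_X brack_expand !compD !compZ (comp_id B1) (comp_id B2) (comp_id B3).
by rewrite !(comp_off _ _ B1, comp_off _ _ B2, comp_off _ _ B3) // !scaler0 ?addr0 ?add0r.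
Qed.

Lemma equigeodesic_brackets : X != 0 ->
  equigeodesic X <->
  [/\ brack_m X12 X13 = 0, brack_m X12 X23 = 0 & brack_m X13 X23 = 0].
Proof.
move=> hX0; split=> [[_ [_ geo]]|[B1 B2 B3]]; last first.
  split; first exact: in_m_X; split=> [//|l12 l13 l23 _ _ _].
  by rewrite Lam_X brack_expand B1 B2 B3 !scaler0 !addr0.
have two_gt0 : (0 : R) < 2 by lra.
have two_sub1 : (2 : R) - 1 = 1 by lra.
have [+ _ _] := comp_geodesic_bracket 1 2 1; have [_ + +] := comp_geodesic_bracket 1 1 2.
rewrite (geo 1 2 1) // (geo 1 1 2) // !comp0 two_sub1 !scale1r.
by move=> <- <- <-.
Qed.

Lemma brackets_matrices :
  [/\ brack_m X12 X13 = 0, brack_m X12 X23 = 0 & brack_m X13 X23 = 0] <->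
  [/\ (matA X)^T *m matC X = 0, matA X *m matD X = 0 & matC X *m (matD X)^T = 0].
Proof.
rewrite -(matA_comp X) -(matC_comp X) -(matD_comp X) comp12_X comp13_X comp23_X.
have E1 := brack12_13_eq0 hX12 hX13; have E2 := brack12_23_eq0 hX12 hX23.
have E3 := brack13_23_eq0 hX13 hX23.
by split=> -[/E1 b1 /E2 b2 /E3 b3].
Qed.

End BlockMatrices.

Arguments equigeodesic_brackets {R n1 n2 n3 X12 X13 X23}.
Arguments brackets_matrices {R n1 n2 n3 X12 X13 X23}.

Theorem proposition4p1 (R : realType) (n1 n2 n3 : nat)
  (h1 : (0 < n1)%N) (h2 : (0 < n2)%N) (h3 : (0 < n3)%N)
  (X12 X13 X23 : 'M[R]_(n1 + n2 + n3))
  (hX12 : in_mij 1 2 X12) (hX13 : in_mij 1 3 X13)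
  (hX23 : in_mij 2 3 X23)
  (hX0 : X12 + X13 + X23 != 0) :
  let X := X12 + X13 + X23 in
  (equigeodesic X <->
     [/\ brack_m X12 X13 = 0, brack_m X12 X23 = 0 & brack_m X13 X23 = 0])
  /\
  (equigeodesic X <->
     [/\ (matA X)^T *m matC X = 0, matA X *m matD X = 0
       & matC X *m (matD X)^T = 0]).
Proof.
have geoP := equigeodesic_brackets hX12 hX13 hX23 hX0.
split=> //; apply: iff_trans geoP _; exact: brackets_matrices.
Qed.
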